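(* Let $\mathcal{I}=\{1,\dots,\mathbf{I}\}$ be a nonempty finite index set, $\{n^i, i\in\mathcal{I}\}$ a finite collection of $d$-dimensional vectors of unit length, $\beta=(\beta_1,\dots,\beta_{\mathbf{I}})'\in\mathbb{R}^{\mathbf{I}}$, and $G_i=\{x\in\mathbb{R}^d:\langle n^i,x\rangle>\beta_i\}$ for $i\in\mathcal{I}$. Suppose $G=\bigcap_{i\in\mathcal{I}} G_i$ is a nonempty domain (so $\overline{G}$ is a convex polyhedron) and that $\partial G_i\cap\partial G\neq\emptyset$ for each $i\in\mathcal{I}$. Then: (a) for each $\varepsilon\in(0,1)$ there exists $R(\varepsilon)>0$ such that for each $i\in\mathcal{I}$, $x\in\partial G_i\cap\partial G$ and $y\in\overline{G}$ with $\|x-y\|<R(\varepsilon)$, we have $\langle n^i, y-x\rangle\ge -\varepsilon\|x-y\|$; and (b) the function $D:[0,\infty)\to[0,\infty]$ defined by $D(0)=0$ and, for $r>0$, $$D(r)=\sup_{\emptyset\neq\mathcal{J}\subset\mathcal{I}}\ \sup\Big\{\operatorname{dist}\Big(x,\bigcap_{j\in\mathcal{J}}(\partial G_j\cap\partial G)\Big): x\in\bigcap_{j\in\mathcal{J}}U_r(\partial G_j\cap\partial G)\Big\}$$ satisfies $D(r)\to 0$ as $r\to 0$.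
   Context: $U_r(S)=\{x\in\mathbb{R}^d:\operatorname{dist}(x,S)\le r\}$ (with $U_r(\emptyset)=\emptyset$), $\operatorname{dist}(x,\emptyset)=\infty$, and the supremum over an empty set is taken to be zero. $\overline{G}$ is the closure and $\partial G$ the boundary of $G$. *)

From HB Require Import structures.
From mathcomp Require Import all_boot all_order all_algebra.
From mathcomp Require Import all_classical all_reals all_analysis.
Set Implicit Arguments. Unset Strict Implicit. Unset Printing Implicit Defensive.
Import Order.TTheory GRing.Theory Num.Theory.
Import numFieldNormedType.Exports.
Local Open Scope classical_set_scope.
Local Open Scope ring_scope.

(* Points of R^d are row vectors 'rV[R]_d (whose topology is the product,
   i.e. Euclidean, topology). *)

Definition inner (R : realType) (d : nat) (u v : 'rV[R]_d) : R :=
  \sum_(k < d) u ord0 k * v ord0 k.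

Definition enorm (R : realType) (d : nat) (u : 'rV[R]_d) : R :=
  Num.sqrt (inner u u).

Definition boundary (T : topologicalType) (A : set T) : set T :=
  closure A `\` interior A.

Definition domain (T : topologicalType) (A : set T) : Prop :=
  A !=set0 /\ open A /\ connected A.

(* dist(x, S) in [0, +oo], with dist(x, set0) = +oo *)
Definition edist (R : realType) (d : nat) (x : 'rV[R]_d) (S : set 'rV[R]_d)
  : \bar R := ereal_inf [set (enorm (x - y))%:E | y in S].

(* U_r(S) = {x : dist(x,S) <= r}; empty when S is empty *)
Definition Unbhd (R : realType) (d : nat) (r : R) (S : set 'rV[R]_d)
  : set 'rV[R]_d := [set x | (edist x S <= r%:E)%E].

(* supremum with the convention sup(empty) = 0 (all sets used are of
   nonnegative values, so this is sup of A together with 0) *)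
Definition esup0 (R : realType) (A : set (\bar R)) : \bar R :=
  ereal_sup (A `|` [set 0%E]).

Definition halfspace (R : realType) (d : nat) (n : 'rV[R]_d) (b : R)
  : set 'rV[R]_d := [set x | b < inner n x].

Definition polyG (R : realType) (d I : nat) (n : 'I_I -> 'rV[R]_d)
  (beta : 'I_I -> R) : set 'rV[R]_d :=
  \bigcap_(i in [set: 'I_I]) halfspace (n i) (beta i).

Definition face (R : realType) (d I : nat) (n : 'I_I -> 'rV[R]_d)
  (beta : 'I_I -> R) (i : 'I_I) : set 'rV[R]_d :=
  boundary (halfspace (n i) (beta i)) `&` boundary (polyG n beta).

Definition Dfun (R : realType) (d I : nat) (n : 'I_I -> 'rV[R]_d)
  (beta : 'I_I -> R) (r : R) : \bar R :=
  if r == 0 then 0%E else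
  esup0 [set s | exists J : {set 'I_I}, J != finset.set0 /\
     s = esup0 [set edist x (\bigcap_(j in [set j | j \in J]) face n beta j)
               | x in \bigcap_(j in [set j | j \in J]) Unbhd r (face n beta j)]].

(* Part (a) holds for every radius: a point x of the face F_i satisfies
   <n_i, x> = beta_i, while every y in the closure of G satisfies
   <n_i, y> >= beta_i.

   Part (b) rests on a local Hoffman error bound for finite systems of linear
   inequalities, proved by Fourier-Motzkin elimination: a point violating each
   inequality by at most del (below some threshold) lies within H * del of an
   exact solution.  The intersection of the faces F_j, j in J, is the solution
   set of "<n_k, y> >= beta_k for all k, <n_j, y> <= beta_j for j in J"
   (given a point of G, every solution of the first group of inequalities lies
   in the closure of G).  A point within r of each such F_j violates this
   system by O(r), hence lies within O(r) of the intersection, and there are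
   finitely many J. *)

From Pilot Require Import Defs.
From HB Require Import structures.
From mathcomp Require Import all_boot all_order all_algebra.
From mathcomp Require Import all_classical all_reals all_analysis.
From mathcomp Require Import ring lra.
Set Implicit Arguments.
Unset Strict Implicit.
Unset Printing Implicit Defensive.
Import Order.TTheory GRing.Theory Num.Theory.
Import numFieldNormedType.Exports.
Local Open Scope classical_set_scope.
Local Open Scope ring_scope.

Section LinearInequalities.
Variable R : realFieldType.
Implicit Types (d : nat) (c p n : (nat -> R) * R) (s : list ((nat -> R) * R)) (x y z : nat -> R).

Lemma ler_norm_list_sum (T : Type) (f : T -> R) (l : list T) t :
  List.In t l -> `|f t| <= \sum_(u <- l) `|f u|.
Proof.
elim: l => [|u l IH] //= [->|tl]; rewrite big_cons; first by rewrite lerDl sumr_ge0.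
by rewrite (le_trans (IH tl)) // lerDr.
Qed.

Lemma exists_list_max (T : Type) (f : T -> R) (l : list T) a :
  exists m, [/\ a <= m, forall t, List.In t l -> f t <= m
            & m = a \/ exists2 t, List.In t l & m = f t].
Proof.
elim: l => [|u l [m [am lm mE]]]; first by exists a; split => //; left.
exists (Num.max (f u) m); split; first by rewrite le_max am orbT.
  by move=> t /= [<-|tl]; rewrite le_max ?lexx // lm ?orbT.
case: (leP (f u) m) => _; last by right; exists u => //=; left.
by case: mE => [->|[t tl ->]]; [left | right; exists t => //=; right].
Qed.

Lemma exists_between_near (T U : Type) (lo : T -> R) (hi : U -> R)
    (L : list T) (H : list U) a e : 0 <= e ->
  (forall t u, List.In t L -> List.In u H -> lo t <= hi u) ->
  (forall t, List.In t L -> lo t - e <= a) ->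
  (forall u, List.In u H -> a <= hi u + e) ->
  exists b, [/\ forall t, List.In t L -> lo t <= b,
                forall u, List.In u H -> b <= hi u & `|a - b| <= e].
Proof.
move=> e0 lohi loa ahi.
have [m [am Lm mE]] := exists_list_max lo L a.
have [m' [mm' Hm' m'E]] := exists_list_max (fun u => - hi u) H (- m).
exists (- m'); split.
- move=> t tL; case: m'E => [->|[u uH ->]]; rewrite opprK; [exact: Lm | exact: lohi].
- by move=> u /Hm'; rewrite lerNl.
rewrite ler_distl; apply/andP; split.
  move: mm'; rewrite lerNl.
  by case: mE => [->|[t tL ->]]; [lra | have := loa t tL; lra].
by case: m'E => [->|[u uH ->]]; rewrite opprK; [lra | have := ahi u uH; lra].
Qed.
Arguments exists_between_near {T U} lo hi L H a e.

(* A pair [c] encodes the inequality [\sum_(i < d) c.1 i * x i >= c.2] and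
   [aeval d c x] is its slack at [x].  Coefficients are indexed by [nat] so that
   the last coordinate can be eliminated by induction on [d]. *)
Definition aeval d c x : R := \sum_(i < d) c.1 i * x i - c.2.

Lemma aevalS d c x : aeval d.+1 c x = aeval d c x + c.1 d * x d.
Proof. by rewrite /aeval big_ord_recr /= addrAC. Qed.

Lemma eq_aeval d c x y : (forall i, (i < d)%N -> x i = y i) -> aeval d c x = aeval d c y.
Proof. by move=> exy; rewrite /aeval; congr (_ - _); apply: eq_bigr => i _; rewrite exy. Qed.

Lemma aeval_lipschitz d c x y B : (forall i, (i < d)%N -> `|x i - y i| <= B) ->
  `|aeval d c x - aeval d c y| <= (\sum_(i < d) `|c.1 i|) * B.
Proof.
move=> xyB.
have -> : aeval d c x - aeval d c y = \sum_(i < d) c.1 i * (x i - y i).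
  by rewrite /aeval opprB addrA subrK -sumrB; apply: eq_bigr => i _; rewrite mulrBr.
rewrite mulr_suml (le_trans (ler_norm_sum _ _ _)) //; apply: ler_sum => i _.
by rewrite normrM ler_wpM2l // xyB.
Qed.

Lemma ler_pMshift (a u del : R) : 0 < a -> - del <= a * u -> - (del / a) <= u.
Proof. by move=> a0 h; rewrite -(ler_pM2l a0) mulrN mulrCA mulfV ?gt_eqF // mulr1. Qed.

Lemma ler_nMshift (a u del : R) : a < 0 -> - del <= a * u -> u <= - (del / a).
Proof. by move=> a0 h; rewrite -(ler_nM2l a0) mulrN mulrCA mulfV ?lt_eqF // mulr1. Qed.

(* The value of the coordinate [d] at which the constraint [c] becomes tight. *)
Definition pivot d c x : R := - (aeval d c x / c.1 d).

Lemma aevalS_pivot d c x : c.1 d != 0 ->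
  aeval d.+1 c x = c.1 d * (x d - pivot d c x).
Proof. by move=> c0; rewrite aevalS /pivot opprK mulrDr mulrCA mulfV // mulr1 addrC. Qed.

Definition fm_comb d p n : (nat -> R) * R :=
  ((fun i => p.1 i / p.1 d - n.1 i / n.1 d), p.2 / p.1 d - n.2 / n.1 d).

Lemma aeval_fm_comb d p n x : aeval d (fm_comb d p n) x = pivot d n x - pivot d p x.
Proof.
rewrite /pivot /aeval /=.
under eq_bigr => i _ do rewrite mulrBl (mulrAC (p.1 i)) (mulrAC (n.1 i)).
rewrite sumrB -!mulr_suml; ring.
Qed.

Definition fm_eliminate d s :=
  List.filter (fun c => c.1 d == 0) s ++
  List.flat_map (fun p => List.map (fm_comb d p) (List.filter (fun n => n.1 d < 0) s))
                (List.filter (fun p => 0 < p.1 d) s).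

Lemma In_fm_eliminate d s c : List.In c (fm_eliminate d s) <->
  (List.In c s /\ c.1 d = 0) \/
  exists p n, [/\ List.In p s, 0 < p.1 d, List.In n s, n.1 d < 0 & c = fm_comb d p n].
Proof.
rewrite List.in_app_iff List.filter_In List.in_flat_map; split.
  case=> [[cs /eqP c0]|[p [/List.filter_In[ps p0] /List.in_map_iff[n [<- nN]]]]].
    by left.
  by move/List.filter_In: nN => [ns n0]; right; exists p, n.
case=> [[cs /eqP c0]|[p [n [ps p0 ns n0 ->]]]]; first by left.
right; exists p; split; first by apply/List.filter_In.
by apply/List.in_map_iff; exists n; split => //; apply/List.filter_In.
Qed.

(* The threshold [del0] is needed for infeasible systems: they have no
   [del]-approximate solutions once [del] is small enough. *)
Definition error_bound d s := exists H del0, [/\ 0 <= H, 0 < del0 &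
  forall del x, 0 <= del < del0 -> (forall c, List.In c s -> - del <= aeval d c x) ->
  exists2 y, forall c, List.In c s -> 0 <= aeval d c y
           & forall i, (i < d)%N -> `|x i - y i| <= H * del].

Lemma error_bound0 s : error_bound 0 s.
Proof.
have aeval0 c x : aeval 0 c x = - c.2 by rewrite /aeval big_ord0 sub0r.
case: (pselect (exists2 c, List.In c s & 0 < c.2)) => [[c cs c2]|infeas].
  exists 0, c.2; split => // del x /andP[_ delc] /(_ c cs).
  by rewrite aeval0; lra.
exists 0, 1; split => // del x _ _; exists x => // c cs.
by rewrite aeval0 oppr_ge0 leNgt; apply/negP => c2; apply: infeas; exists c.
Qed.

Section Elimination.
Variables (d : nat) (s : list ((nat -> R) * R)).

Let inv_bound : R := \sum_(c <- s) `|(c.1 d)^-1|.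
Let lip_bound : R := \sum_(c <- s) `|(\sum_(i < d) `|c.1 i|) / c.1 d|.

Let inv_bound_ge0 : 0 <= inv_bound. Proof. exact: sumr_ge0. Qed.
Let lip_bound_ge0 : 0 <= lip_bound. Proof. exact: sumr_ge0. Qed.

Let del_inv_le c (del : R) : List.In c s -> 0 <= del -> `|del / c.1 d| <= inv_bound * del.
Proof.
move=> cs del0; rewrite normrM ger0_norm // mulrC ler_wpM2r //.
exact: (ler_norm_list_sum (fun c => (c.1 d)^-1)).
Qed.

Lemma pivot_lower c x (del : R) : List.In c s -> 0 < c.1 d -> 0 <= del ->
  - del <= aeval d.+1 c x -> pivot d c x - inv_bound * del <= x d.
Proof.
move=> cs c0 del0; rewrite aevalS_pivot ?gt_eqF // => /(ler_pMshift c0).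
have := del_inv_le cs del0; rewrite ger0_norm; [lra | by rewrite divr_ge0 // ltW].
Qed.

Lemma pivot_upper c x (del : R) : List.In c s -> c.1 d < 0 -> 0 <= del ->
  - del <= aeval d.+1 c x -> x d <= pivot d c x + inv_bound * del.
Proof.
move=> cs c0 del0; rewrite aevalS_pivot ?lt_eqF // => /(ler_nMshift c0).
have := del_inv_le cs del0; rewrite ler0_norm; [lra | by rewrite mulr_ge0_le0 // invr_le0 ltW].
Qed.

Lemma pivot_lipschitz c x y (B : R) : List.In c s -> 0 <= B ->
  (forall i, (i < d)%N -> `|x i - y i| <= B) ->
  `|pivot d c x - pivot d c y| <= lip_bound * B.
Proof.
move=> cs B0 xyB; rewrite /pivot opprK addrC -mulrBl normrM distrC.
apply: le_trans (ler_wpM2r (normr_ge0 _) (aeval_lipschitz c xyB)) _.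
rewrite mulrAC ler_wpM2r //.
have := ler_norm_list_sum (fun c => (\sum_(i < d) `|c.1 i|) / c.1 d) cs.
by rewrite normrM (ger0_norm (sumr_ge0 _ (fun i _ => normr_ge0 _))).
Qed.

Lemma fm_eliminate_approx x (del : R) : 0 <= del ->
  (forall c, List.In c s -> - del <= aeval d.+1 c x) ->
  forall c, List.In c (fm_eliminate d s) -> - ((2 * inv_bound + 1) * del) <= aeval d c x.
Proof.
move=> del0 xs c /In_fm_eliminate [[cs c0]|[p [n [ps p0 ns n0 ->]]]];
  have := mulr_ge0 inv_bound_ge0 del0.
  by have := xs c cs; rewrite aevalS c0 mul0r addr0; nra.
have := pivot_lower ps p0 del0 (xs p ps); have := pivot_upper ns n0 del0 (xs n ns).
by rewrite aeval_fm_comb; nra.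
Qed.

Lemma fm_lift x y (del B : R) : 0 <= del -> 0 <= B ->
  (forall c, List.In c s -> - del <= aeval d.+1 c x) ->
  (forall c, List.In c (fm_eliminate d s) -> 0 <= aeval d c y) ->
  (forall i, (i < d)%N -> `|x i - y i| <= B) ->
  exists2 z, forall c, List.In c s -> 0 <= aeval d.+1 c z
           & forall i, (i < d.+1)%N -> `|x i - z i| <= B + (inv_bound * del + lip_bound * B).
Proof.
move=> del0 B0 xs ys xyB.
pose lowers := List.filter (fun p => 0 < p.1 d) s.
pose uppers := List.filter (fun n => n.1 d < 0) s.
pose e := inv_bound * del + lip_bound * B.
have e0 : 0 <= e by rewrite addr_ge0 ?mulr_ge0.
have pivot_near c : List.In c s -> `|pivot d c x - pivot d c y| <= lip_bound * B.
  by move=> cs; exact: pivot_lipschitz.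
have lowers_le_uppers p n : List.In p lowers -> List.In n uppers -> pivot d p y <= pivot d n y.
  move=> /List.filter_In[ps p0] /List.filter_In[ns n0].
  rewrite -subr_ge0 -aeval_fm_comb; apply: ys; apply/In_fm_eliminate; right.
  by exists p, n.
have lowers_near p : List.In p lowers -> pivot d p y - e <= x d.
  move=> /List.filter_In[ps p0]; have := pivot_lower ps p0 del0 (xs p ps).
  by have := pivot_near p ps; rewrite ler_norml /e; lra.
have uppers_near n : List.In n uppers -> x d <= pivot d n y + e.
  move=> /List.filter_In[ns n0]; have := pivot_upper ns n0 del0 (xs n ns).
  by have := pivot_near n ns; rewrite ler_norml /e; lra.
have [b [lob bhi xb]] := exists_between_near (pivot d ^~ y) (pivot d ^~ y) lowers uppers
  (x d) e e0 lowers_le_uppers lowers_near uppers_near.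
pose z i := if i == d then b else y i.
have zy c : aeval d c z = aeval d c y by apply: eq_aeval => i /ltn_eqF; rewrite /z => ->.
have pivot_z c : pivot d c z = pivot d c y by rewrite /pivot zy.
exists z => [c cs|i].
  case: (ltgtP (c.1 d) 0) => c0.
  - rewrite aevalS_pivot ?lt_eqF // pivot_z /z eqxx nmulr_rge0 // subr_le0.
    by apply: bhi; apply/List.filter_In.
  - rewrite aevalS_pivot ?gt_eqF // pivot_z /z eqxx pmulr_rge0 // subr_ge0.
    by apply: lob; apply/List.filter_In.
  - rewrite aevalS c0 mul0r addr0 zy; apply: ys; apply/In_fm_eliminate; left.
    by split.
rewrite ltnS leq_eqVlt => /orP[/eqP ->|id]; first by rewrite /z eqxx; move: xb; rewrite /e; lra.
by rewrite /z ltn_eqF //; move: (xyB i id) e0; rewrite /e; lra.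
Qed.

Lemma error_bound_eliminate : error_bound d (fm_eliminate d s) -> error_bound d.+1 s.
Proof.
move=> [H [del0 [H0 del00 approx]]].
pose K := 2 * inv_bound + 1; have K0 : 0 < K by rewrite /K; have := inv_bound_ge0; lra.
exists (H * K + (inv_bound + lip_bound * (H * K))), (del0 / K).
split; [by rewrite !addr_ge0 ?mulr_ge0 // ltW | by rewrite divr_gt0 |].
move=> del x /andP[delge0 dellt] xs.
have Kdel : 0 <= K * del < del0.
  by rewrite mulr_ge0 ?(ltW K0) //= mulrC -ltr_pdivlMr.
have [y ys xy] := approx _ x Kdel (fm_eliminate_approx delge0 xs).
have HKdel0 : 0 <= H * (K * del) by rewrite !mulr_ge0 // ltW.
have [z zs xz] := fm_lift delge0 HKdel0 xs ys xy.
exists z => // i /xz; congr (_ <= _); ring.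
Qed.

End Elimination.

Theorem linear_error_bound d s : error_bound d s.
Proof.
elim: d s => [|d IH] s; first exact: error_bound0.
exact/error_bound_eliminate/IH.
Qed.

End LinearInequalities.

Section Euclidean.
Variables (R : realType) (d : nat).
Implicit Types (a u v : 'rV[R]_d).

Lemma innerD a u v : inner a (u + v) = inner a u + inner a v.
Proof. by rewrite /inner -big_split; apply: eq_bigr => k _; rewrite mxE mulrDr. Qed.

Lemma innerB a u v : inner a (u - v) = inner a u - inner a v.
Proof. by rewrite /inner -sumrB; apply: eq_bigr => k _; rewrite !mxE mulrBr. Qed.

Lemma innerZ a u (t : R) : inner a (t *: u) = t * inner a u.
Proof. by rewrite /inner mulr_sumr; apply: eq_bigr => k _; rewrite mxE mulrCA. Qed.

Lemma innerNl a u : inner (- a) u = - inner a u.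
Proof. by rewrite /inner -sumrN; apply: eq_bigr => k _; rewrite mxE mulNr. Qed.

Lemma ler_norm_inner a u (m : R) : (forall k, `|u ord0 k| <= m) ->
  `|inner a u| <= (\sum_k `|a ord0 k|) * m.
Proof.
move=> um; rewrite /inner mulr_suml (le_trans (ler_norm_sum _ _ _)) //.
by apply: ler_sum => k _; rewrite normrM ler_wpM2l.
Qed.

Lemma coord_le_norm u k : `|u ord0 k| <= `|u|.
Proof.
have /mapP[j Hj ->] : `|u ord0 k| \in [seq `|u x.1 x.2| | x : 'I_1 * 'I_d].
  by apply/mapP; exists (ord0, k) => //=; rewrite mem_enum.
by rewrite [leRHS]/Num.norm /= mx_normrE; apply/bigmax_geP; right => /=; exists j.
Qed.

Lemma enorm_ge0 u : 0 <= enorm u.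
Proof. exact: sqrtr_ge0. Qed.

Lemma coord_le_enorm u k : `|u ord0 k| <= enorm u.
Proof.
have sq_ge0 (t : R) : 0 <= t * t by rewrite -expr2 sqr_ge0.
rewrite -sqrtr_sqr /enorm ler_sqrt; last by rewrite sumr_ge0.
by rewrite /inner expr2 (bigD1 k) //= lerDl sumr_ge0.
Qed.

Lemma enorm_le_sum u : enorm u <= \sum_k `|u ord0 k|.
Proof.
rewrite -[leRHS]ger0_norm ?sumr_ge0 // -sqrtr_sqr /enorm ler_sqrt ?sqr_ge0 //.
rewrite expr2 mulr_suml /inner; apply: ler_sum => k _.
apply: le_trans (ler_norm _) _; rewrite normrM ler_wpM2l //.
by rewrite (bigD1 k) //= lerDl sumr_ge0.
Qed.

Lemma ler_inner_norm a u : `|inner a u| <= (\sum_k `|a ord0 k|) * `|u|.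
Proof. exact/ler_norm_inner/coord_le_norm. Qed.

Lemma ler_inner_enorm a u : `|inner a u| <= (\sum_k `|a ord0 k|) * enorm u.
Proof. exact/ler_norm_inner/coord_le_enorm. Qed.

Lemma near_inner a u (e : R) : 0 < e -> \forall v \near u, `|inner a v - inner a u| < e.
Proof.
move=> e0; set S := \sum_k `|a ord0 k|.
have S0 : 0 <= S by rewrite sumr_ge0.
apply/nbhs_ballP; exists (e / (S + 1)) => [|v]; first by rewrite /= divr_gt0 //; lra.
rewrite -ball_normE /= distrC => uv; rewrite -innerB.
apply: le_lt_trans (ler_inner_norm a _) _.
have := ler_wpM2l S0 (ltW uv).
have : S * (e / (S + 1)) < e by rewrite mulrA ltr_pdivrMr; nra.
rewrite -/S; lra.
Qed.

Lemma closure_halfspace a (b : R) u : closure (halfspace a b) u -> b <= inner a u.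
Proof.
move=> cl; rewrite leNgt; apply/negP => ua.
have bu : 0 < b - inner a u by rewrite subr_gt0.
have [v [av uv]] := cl _ (near_inner a u bu).
by move: av uv; rewrite /halfspace /= ltr_norml; lra.
Qed.

Lemma interior_halfspace a (b : R) u : b < inner a u -> interior (halfspace a b) u.
Proof.
move=> au; have ub : 0 < inner a u - b by rewrite subr_gt0.
apply: filterS (near_inner a u ub) => v.
by rewrite /halfspace /= ltr_norml; lra.
Qed.

Lemma edist_le_enorm u (S : set 'rV[R]_d) v : S v -> (Defs.edist u S <= (enorm (u - v))%:E)%E.
Proof. by move=> Sv; apply: ge_ereal_inf; exists (enorm (u - v))%:E => //; exists v. Qed.

Lemma edist_lt u (S : set 'rV[R]_d) (r : R) : (Defs.edist u S < r%:E)%E ->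
  exists2 v, S v & enorm (u - v) < r.
Proof. by move=> /ereal_inf_lt[_ [v Sv <-]]; rewrite lte_fin; exists v. Qed.

End Euclidean.

Section Faces.
Variables (R : realType) (d I : nat) (n : 'I_I -> 'rV[R]_d) (beta : 'I_I -> R).
Local Notation G := (polyG n beta).

Lemma closure_polyG y k : closure G y -> beta k <= inner (n k) y.
Proof.
by move=> /(closureS (fun z (Gz : G z) => Gz k Logic.I)); exact: closure_halfspace.
Qed.

Lemma polyG_closure g y : G g -> (forall k, beta k <= inner (n k) y) -> closure G y.
Proof.
move=> Gg yG B /nbhs_ballP[e /= e0 yeB].
pose t := e / (`|g - y| + e).
have ge0 : 0 < `|g - y| + e by rewrite ltr_wpDl.
have t0 : 0 < t by rewrite divr_gt0.
have t1 : t <= 1 by rewrite ler_pdivrMr // mul1r lerDr.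
exists (y + t *: (g - y)); split.
  move=> k _; rewrite /halfspace /= innerD innerZ innerB.
  by have := Gg k Logic.I; have := yG k; rewrite /halfspace /=; nra.
apply: yeB; rewrite -ball_normE /= opprD addrA subrr add0r normrN normrZ ger0_norm ?ltW //.
by rewrite mulrAC ltr_pdivrMr // ltr_pM2l // ltrDl.
Qed.

Lemma face_tight i x : face n beta i x -> inner (n i) x = beta i.
Proof.
move=> [[cli /= xi] [clG _]]; apply/eqP; rewrite eq_le closure_polyG // andbT.
by rewrite leNgt; apply/negP => /interior_halfspace.
Qed.

Lemma tight_face g i y : G g -> (forall k, beta k <= inner (n k) y) ->
  inner (n i) y = beta i -> face n beta i y.
Proof.
move=> Gg yG yi; have clG := polyG_closure Gg yG.
have not_int A : A `<=` halfspace (n i) (beta i) -> ~ interior A y.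
  by move=> Ai /interior_subset /Ai; rewrite /halfspace /= yi ltxx.
split; split => //; last by apply: not_int => z /(_ i Logic.I).
- exact: closureS (fun z (Gz : G z) => Gz i Logic.I) _ clG.
- exact: not_int.
Qed.

Lemma face_inner_ge0 i x y : face n beta i x -> closure G y -> 0 <= inner (n i) (y - x).
Proof. by move=> fx clGy; rewrite innerB (face_tight fx) subr_ge0; exact: closure_polyG. Qed.

End Faces.

Lemma InP (T : eqType) (x : T) (s : seq T) : reflect (List.In x s) (x \in s).
Proof.
elim: s => [|y s IH] /=; first by right.
rewrite inE; apply: (iffP orP) => [[/eqP->|/IH]|[->|/IH]]; by [left | right | left | right].
Qed.

Lemma near0_mulr_lt (R : realType) (M a : R) : 0 <= M -> 0 < a ->
  \forall r \near 0^'+, M * r < a.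
Proof.
move=> M0 a0; near=> r.
have r0 : 0 < r by near: r; exact: nbhs_right_gt.
have : r < a / (M + 1) by near: r; apply: nbhs_right_lt; rewrite divr_gt0 //; lra.
by rewrite ltr_pdivlMr; [nra | lra].
Unshelve. all: by end_near. Qed.

Section Coordinates.
Variables (R : realType) (d : nat).

Definition coords (x : 'rV[R]_d) : nat -> R :=
  fun i => if insub i is Some k then x ord0 k else 0.

Lemma coordsE x (k : 'I_d) : coords x k = x ord0 k.
Proof. by rewrite /coords valK. Qed.

Lemma row_coords x : \row_(k < d) coords x k = x.
Proof. by apply/rowP => k; rewrite mxE coordsE. Qed.

Definition ge_constr (a : 'rV[R]_d) (b : R) : (nat -> R) * R := (coords a, b).

Lemma aeval_ge_constr a b (y : nat -> R) :
  aeval d (ge_constr a b) y = inner a (\row_(k < d) y k) - b.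
Proof. by rewrite /aeval /inner /=; congr (_ - _); apply: eq_bigr => k _; rewrite coordsE mxE. Qed.

End Coordinates.

Section FaceSystem.
Variables (R : realType) (d I : nat) (n : 'I_I -> 'rV[R]_d) (beta : 'I_I -> R).
Local Notation G := (polyG n beta).
Local Notation faces J := (\bigcap_(j in [set j | j \in J]) face n beta j).

Definition face_system (J : {set 'I_I}) : list ((nat -> R) * R) :=
  List.map (fun k => ge_constr (n k) (beta k)) (enum 'I_I) ++
  List.map (fun j => ge_constr (- n j) (- beta j)) (enum J).

Lemma In_face_system J c : List.In c (face_system J) <->
  (exists k, c = ge_constr (n k) (beta k)) \/
  (exists2 j, j \in J & c = ge_constr (- n j) (- beta j)).
Proof.
rewrite List.in_app_iff !List.in_map_iff; split.
  case=> [[k [<- _]]|[j [<- /InP]]]; first by left; exists k.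
  by rewrite mem_enum => jJ; right; exists j.
by case=> [[k ->]|[j jJ ->]]; [left; exists k | right; exists j];
  split => //; apply/InP; rewrite mem_enum.
Qed.

Lemma face_system_face g J z : G g ->
  (forall c, List.In c (face_system J) -> 0 <= aeval d c z) ->
  faces J (\row_(k < d) z k).
Proof.
move=> Gg zJ; have zG k : beta k <= inner (n k) (\row_(k < d) z k).
  rewrite -subr_ge0 -aeval_ge_constr; apply: zJ; apply/In_face_system.
  by left; exists k.
move=> j /= jJ; apply: (tight_face Gg zG); apply/eqP; rewrite eq_le zG andbT.
rewrite -subr_ge0 addrC -[beta j]opprK -innerNl -aeval_ge_constr.
apply: zJ; apply/In_face_system.
by right; exists j.
Qed.

Let S : R := \sum_k \sum_i `|n k ord0 i|.

Let S_ge0 : 0 <= S. Proof. by rewrite sumr_ge0 // => k _; rewrite sumr_ge0. Qed.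

Let lipschitz_inner k x y : `|inner (n k) x - inner (n k) y| <= S * enorm (x - y).
Proof.
rewrite -innerB (le_trans (ler_inner_enorm _ _)) // ler_wpM2r ?enorm_ge0 //.
by rewrite /S (bigD1 k) //= lerDl sumr_ge0 // => i _; rewrite sumr_ge0.
Qed.

Lemma near_faces_approx (J : {set 'I_I}) x (r : R) : 0 < r -> J != finset.set0 ->
  (forall j, j \in J -> (Defs.edist x (face n beta j) <= r%:E)%E) ->
  forall c, List.In c (face_system J) -> - (2 * S * r) <= aeval d c (coords x).
Proof.
move=> r0 /set0Pn[j0 j0J] xJ.
have near_face j : j \in J -> exists2 y, face n beta j y & S * enorm (x - y) <= 2 * S * r.
  move=> jJ; have : (Defs.edist x (face n beta j) < (2 * r)%:E)%E.
    by rewrite (le_lt_trans (xJ j jJ)) // lte_fin; lra.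
  move=> /edist_lt[y fy xy]; exists y => //.
  by rewrite [2 * S]mulrC -mulrA ler_wpM2l // ltW.
have [y0 fy0 xy0] := near_face j0 j0J.
move=> c /In_face_system[[k ->]|[j jJ ->]]; rewrite aeval_ge_constr row_coords.
  have := closure_polyG k (fy0.2.1); have := lipschitz_inner k x y0.
  by rewrite ler_norml; lra.
have [y fy xy] := near_face j jJ; have := face_tight fy; have := lipschitz_inner j x y.
by rewrite innerNl ler_norml; lra.
Qed.

Lemma near_faces_near_intersection g (J : {set 'I_I}) (e : R) : G g -> 0 < e ->
  \forall r \near 0^'+, J != finset.set0 -> forall x,
    (forall j, j \in J -> (Defs.edist x (face n beta j) <= r%:E)%E) ->
    (Defs.edist x (faces J) <= e%:E)%E.
Proof.
move=> Gg e0; have [H [del0 [H0 del00 approx]]] := linear_error_bound d (face_system J).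
have S2 : 0 <= 2 * S by rewrite mulr_ge0.
near=> r => J0 x xJ.
have r0 : 0 < r by near: r; exact: nbhs_right_gt.
have r_del0 : 2 * S * r < del0 by near: r; exact: near0_mulr_lt.
have r_e : d%:R * H * (2 * S) * r < e.
  by near: r; apply: near0_mulr_lt => //; rewrite !mulr_ge0.
have [|z zJ xz] := approx _ (coords x) _ (near_faces_approx r0 J0 xJ).
  by rewrite r_del0 mulr_ge0 // ltW.
apply: le_trans (edist_le_enorm x (face_system_face Gg zJ)) _.
rewrite lee_fin (le_trans (enorm_le_sum _)) //.
apply: le_trans (_ : \sum_(k < d) H * (2 * S * r) <= _).
  by apply: ler_sum => k _; rewrite !mxE -coordsE; exact: xz.
rewrite sumr_const card_ord -mulr_natl; apply: ltW.
by rewrite [X in X < _](_ : _ = d%:R * H * (2 * S) * r) //; ring.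
Unshelve. all: by end_near. Qed.

End FaceSystem.

Theorem lemmaA3 (R : realType) (d I : nat) (n : 'I_I -> 'rV[R]_d)
  (beta : 'I_I -> R) :
  (0 < I)%N ->
  (forall i, enorm (n i) = 1) ->
  domain (polyG n beta) ->
  (forall i, face n beta i !=set0) ->
  (forall eps : R, 0 < eps < 1 ->
     exists Reps : R, 0 < Reps /\
       forall (i : 'I_I) (x y : 'rV[R]_d),
         face n beta i x -> closure (polyG n beta) y ->
         enorm (x - y) < Reps ->
         - (eps * enorm (x - y)) <= inner (n i) (y - x))
  /\
  (forall e : R, 0 < e -> exists delta : R, 0 < delta /\
     forall r : R, 0 <= r < delta -> (Dfun n beta r <= e%:E)%E).
Proof.
move=> _ _ [[g Gg] _] _; split.
  move=> eps /andP[eps0 _]; exists 1; split => // i x y fx clGy _.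
  have := face_inner_ge0 fx clGy; have := mulr_ge0 (ltW eps0) (enorm_ge0 (x - y)).
  lra.
move=> e e0.
have := filter_forall (at_right_proper_filter 0) (fun J => near_faces_near_intersection J Gg e0).
rewrite near_withinE => /nbhs_ballP[dl /= dl0 Dl].
exists dl; split => // r /andP[r0 rdl].
rewrite /Dfun; case: eqP => [_|/eqP rn0]; first by rewrite lee_fin ltW.
have {}r0 : 0 < r by rewrite lt_neqAle eq_sym rn0.
apply: ge_ereal_sup => _ [[J [Jn0 ->]]|->]; last by rewrite lee_fin ltW.
apply: ge_ereal_sup => _ [[x xJ <-]|->]; last by rewrite lee_fin ltW.
apply: (Dl r _ r0 J Jn0 x) => [|j jJ]; last exact: xJ.
by rewrite -ball_normE /= sub0r normrN gtr0_norm.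
Qed.
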